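(* Let $d\ge 2$. Let $\rho_T$ be a density matrix on $\mathbb{C}^2$ with eigenvalues, sorted in decreasing order, $\{\alpha, 1-\alpha\}$, and let $\rho_A$ be a density matrix on $\mathbb{C}^d$ with eigenvalues, sorted in decreasing order, $\beta_1 \ge \beta_2 \ge \dots \ge \beta_d$. Let $U$ be any unitary on $\mathbb{C}^2\otimes\mathbb{C}^d$, and let $\rho_T^{out} = \mathrm{Tr}_A\!\left(U(\rho_T\otimes\rho_A)U^\dagger\right)$ have eigenvalues, sorted in decreasing order, $\{\alpha^{out}, 1-\alpha^{out}\}$. Then $$\alpha^{out} \le \max\left(\alpha, \frac{\beta_1}{\beta_1+\beta_d}\right).$$
   Context: $\mathrm{Tr}_A$ denotes the partial trace over the auxiliary factor $\mathbb{C}^d$; the factor $\mathbb{C}^2$ is the target qubit. *)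

From HB Require Import structures.
From mathcomp Require Import all_boot all_order all_algebra.
From mathcomp Require Export complex mxtens.
Set Implicit Arguments. Unset Strict Implicit. Unset Printing Implicit Defensive.
Import Order.TTheory GRing.Theory Num.Theory.
Local Open Scope ring_scope.

Definition dagmx (C : numClosedFieldType) m n (A : 'M[C]_(m, n)) : 'M[C]_(n, m) :=
  (map_mx Num.conj A)^T.

Definition density_matrix (C : numClosedFieldType) n (rho : 'M[C]_n) : Prop :=
  [/\ dagmx rho = rho,
      (forall v : 'cV[C]_n, 0 <= (dagmx v *m rho *m v) 0 0)
    & \tr rho = 1].

Definition unitary_mx (C : numClosedFieldType) n (U : 'M[C]_n) : Prop :=
  U *m dagmx U = 1%:M.

Definition eigenvalues_dec (C : numClosedFieldType) n (A : 'M[C]_n) (s : seq C) : Prop :=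
  [/\ size s = n,
      char_poly A = \prod_(x <- s) ('X - x%:P)
    & sorted (fun x y => y <= x) s].

(* Partial trace over the second tensor factor C^d of C^m (x) C^d, with the
   index convention of mxtens (tensmx): (i,j) |-> i*d + j. *)
Definition ptrace2 (C : numClosedFieldType) m d (M : 'M[C]_(m * d)) : 'M[C]_m :=
  \matrix_(i, k) \sum_(j < d) M (mxtens_index (i, j)) (mxtens_index (k, j)).

From HB Require Import structures.
From mathcomp Require Import all_boot all_order all_algebra.
From mathcomp Require Import complex mxtens spectral sesquilinear ring.
Import Order.TTheory GRing.Theory Num.Theory.
Local Open Scope ring_scope.
Set Implicit Arguments. Unset Strict Implicit. Unset Printing Implicit Defensive.

(* Diagonalise rho_T = P^* diag(a) P and rho_A = Q^* diag(b) Q.  Then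
   U (rho_T (x) rho_A) U^* = X diag(a (x) b) X^* with X = U (P (x) Q)^* unitary, so
   for an eigenvector v of the output state with eigenvalue alpha_out,
     alpha_out |v|^2 = sum_(i,t) a_i b_t c_(i,t),
   where c_k = sum_j |(v X_j)_k|^2 and X_j is the j-th block of rows of X.
   Cauchy-Schwarz and the unitarity of X give 0 <= c_k <= |v|^2 and
   sum_k c_k = d |v|^2.  Over this polytope the linear form is at most m |v|^2
   whenever a_i <= m and b_1 <= m (b_1 + b_d), and m = max(alpha, b_1 / (b_1 + b_d))
   is such a bound. *)

Lemma char_poly_conj (R : comNzRingType) n (Q P M : 'M[R]_n) :
  Q *m P = 1%:M -> char_poly (Q *m M *m P) = char_poly M.
Proof.
move=> QP; rewrite /char_poly /char_poly_mx.
have -> : 'X%:M - map_mx polyC (Q *m M *m P) =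
    map_mx polyC Q *m ('X%:M - map_mx polyC M) *m map_mx polyC P.
  rewrite mulmxBr mulmxBl !map_mxM; congr (_ - _).
  by rewrite scalar_mxC -mulmxA -map_mxM QP map_mx1 mulmx1.
by rewrite !det_mulmx mulrAC -det_mulmx -map_mxM QP map_mx1 det1 mul1r.
Qed.

Lemma sum_mxtens_index (V : nmodType) m n (F : 'I_(m * n) -> V) :
  \sum_l F l = \sum_(i < m) \sum_(j < n) F (mxtens_index (i, j)).
Proof.
rewrite pair_big /= (reindex (@mxtens_index m n)) /=; first by apply: eq_bigr => -[].
by exists (@mxtens_unindex m n) => l _; rewrite (mxtens_indexK, mxtens_unindexK).
Qed.

Lemma tensmx11 (R : pzRingType) m n : (1%:M : 'M[R]_m) *t (1%:M : 'M[R]_n) = 1%:M.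
Proof.
apply/matrixP => k l.
case: (mxtens_indexP k) => i j; case: (mxtens_indexP l) => i' j'.
rewrite tensmxE !mxE (inj_eq (can_inj (@mxtens_indexK m n))) xpair_eqE.
by case: (i == i'); case: (j == j'); rewrite ?mulr1 ?mulr0.
Qed.

Lemma tensrowE (R : pzRingType) m n (a : 'rV[R]_m) (b : 'rV[R]_n) i j :
  (a *t b) 0 (mxtens_index (i, j)) = a 0 i * b 0 j.
Proof. by rewrite mxE mxtens_indexK !ord1. Qed.

Lemma tensmx_diag (R : pzRingType) m n (a : 'rV[R]_m) (b : 'rV[R]_n) :
  diag_mx a *t diag_mx b = diag_mx (a *t b).
Proof.
apply/matrixP => k l.
case: (mxtens_indexP k) => i j; case: (mxtens_indexP l) => i' j'.
rewrite tensmxE [diag_mx (a *t b) _ _]mxE tensrowE !mxE.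
rewrite (inj_eq (can_inj (@mxtens_indexK m n))) xpair_eqE.
by case: eqP => [->|]; case: eqP => [->|]; rewrite ?mulr1n ?mulr0n ?mulr0 ?mul0r.
Qed.

Section Adjoint.
Variable C : numClosedFieldType.

Lemma dagmxE m n (A : 'M[C]_(m, n)) : dagmx A = (A ^t*)%sesqui.
Proof. by rewrite /dagmx map_trmx. Qed.

Lemma dagmxK m n (A : 'M[C]_(m, n)) : dagmx (dagmx A) = A.
Proof. by rewrite !dagmxE trmxCK. Qed.

Lemma dagmxM m n p (A : 'M[C]_(m, n)) (B : 'M[C]_(n, p)) :
  dagmx (A *m B) = dagmx B *m dagmx A.
Proof. by rewrite /dagmx map_mxM trmx_mul. Qed.

Lemma dagmx_tens m n p q (A : 'M[C]_(m, n)) (B : 'M[C]_(p, q)) :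
  dagmx (A *t B) = dagmx A *t dagmx B.
Proof. by rewrite /dagmx map_mxT trmx_tens. Qed.

Lemma unitary_mxP n (U : 'M[C]_n) : reflect (unitary_mx U) (U \is unitarymx).
Proof. by rewrite /unitary_mx dagmxE; apply: unitarymxP. Qed.

Lemma dagmx_mulmx_unitary n (U : 'M[C]_n) : U \is unitarymx -> dagmx U *m U = 1%:M.
Proof. by move/unitary_mxP/mulmx1C. Qed.

Lemma tensmx_unitary m n (A : 'M[C]_m) (B : 'M[C]_n) :
  A \is unitarymx -> B \is unitarymx -> A *t B \is unitarymx.
Proof.
move=> /unitary_mxP A_unit /unitary_mxP B_unit; apply/unitary_mxP.
by rewrite /unitary_mx dagmx_tens tensmx_mul A_unit B_unit tensmx11.
Qed.

Lemma dagmx_unitary n (U : 'M[C]_n) : (dagmx U \is unitarymx) = (U \is unitarymx).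
Proof. by rewrite dagmxE trmxC_unitary. Qed.

Lemma dotmxxE n (u : 'rV[C]_n) : dotmx u u = \sum_k `|u 0 k| ^+ 2.
Proof. by rewrite dotmxE mxE; apply: eq_bigr => k _; rewrite !mxE normCK. Qed.

Lemma mulmx_dotmx m n (v : 'rV[C]_m) (B : 'M[C]_(m, n)) k :
  (v *m B) 0 k = dotmx v (dagmx (col k B)).
Proof. by rewrite dotmxE -dagmxE dagmxK !mxE; apply: eq_bigr => i _; rewrite !mxE. Qed.

End Adjoint.

Section HermitianSpectral.
Variables (C : numClosedFieldType) (n : nat) (A : 'M[C]_n).
Hypothesis A_herm : dagmx A = A.
Local Notation P := (spectralmx A).
Local Notation D := (spectral_diag A).

Lemma hermitian_spectralE : A = dagmx P *m diag_mx D *m P.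
Proof.
have /orthomx_spectralP {1}-> : A \is normalmx by rewrite qualifE -dagmxE A_herm.
by rewrite invmx_unitary ?dagmxE // spectral_unitarymx.
Qed.

Lemma spectral_conj_hermitian : P *m A *m dagmx P = diag_mx D.
Proof.
have /unitary_mxP P_unit := spectral_unitarymx A.
rewrite [X in _ *m X *m _]hermitian_spectralE !mulmxA P_unit mul1mx.
by rewrite -mulmxA P_unit mulmx1.
Qed.

Lemma char_poly_hermitian : char_poly A = \prod_(i < n) ('X - (D 0 i)%:P).
Proof.
rewrite {1}hermitian_spectralE char_poly_conj ?dagmx_mulmx_unitary ?spectral_unitarymx //.
rewrite char_poly_trig ?diag_mx_is_trig //.
by apply: eq_bigr => i _; rewrite mxE eqxx mulr1n.
Qed.

Lemma mxtrace_hermitian : \tr A = \sum_i D 0 i.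
Proof.
have /unitary_mxP P_unit := spectral_unitarymx A.
by rewrite {1}hermitian_spectralE mxtrace_mulC mulmxA P_unit mul1mx mxtrace_diag.
Qed.

Lemma eigenvalues_dec_hermitian s : eigenvalues_dec A s -> s =i codom (fun i => D 0 i).
Proof.
case=> _ charA _ x; rewrite -root_prod_XsubC -charA char_poly_hermitian.
by rewrite -(big_image _ _ _ _ (fun y => 'X - y%:P)) root_prod_XsubC.
Qed.

Lemma psd_spectral_ge0 :
  (forall v : 'cV[C]_n, 0 <= (dagmx v *m A *m v) 0 0) -> forall i, 0 <= D 0 i.
Proof.
move=> A_psd i; have := A_psd (dagmx (row i P)).
have -> : (dagmx (dagmx (row i P)) *m A *m dagmx (row i P)) 0 0 =
    (P *m A *m dagmx P) i i.
  by rewrite dagmxK -row_mul !mxE; apply: eq_bigr => k _; rewrite !mxE.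
by rewrite spectral_conj_hermitian mxE eqxx mulr1n.
Qed.

End HermitianSpectral.

Lemma tensmx_hermitian_spectralE (C : numClosedFieldType) m n
    (A : 'M[C]_m) (B : 'M[C]_n) :
  dagmx A = A -> dagmx B = B ->
  A *t B = dagmx (spectralmx A *t spectralmx B) *m
           diag_mx (spectral_diag A *t spectral_diag B) *m (spectralmx A *t spectralmx B).
Proof.
move=> A_herm B_herm.
rewrite {1}(hermitian_spectralE A_herm) {1}(hermitian_spectralE B_herm).
by rewrite -!tensmx_mul -tensmx_diag dagmx_tens.
Qed.

Lemma sorted_ge_nth_bounds disp (T : porderType disp) (x0 x : T) (s : seq T) :
  sorted (fun a b => b <= a)%O s -> x \in s ->
  (nth x0 s (size s).-1 <= x <= nth x0 s 0)%O.
Proof.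
move=> s_sorted x_in_s; rewrite -(nth_index x0 x_in_s).
have ge_trans : transitive (fun a b : T => b <= a)%O.
  by move=> ? ? ? /[swap]; apply: le_trans.
have ge_nth := sorted_leq_nth ge_trans (@lexx _ T) x0 s_sorted.
have idx_lt : (index x s < size s)%N by rewrite index_mem.
have size_gt0 : (0 < size s)%N by apply: leq_ltn_trans idx_lt.
by rewrite !ge_nth ?inE ?prednK // -ltnS prednK.
Qed.

Section DensityMatrix.
Variables (C : numClosedFieldType) (n : nat) (rho : 'M[C]_n) (s : seq C).
Hypotheses (rho_density : density_matrix rho) (rho_eigen : eigenvalues_dec rho s).
Local Notation D := (spectral_diag rho).

Lemma density_spectral_sum : \sum_i D 0 i = 1.
Proof. by case: rho_density => herm _ <-; rewrite mxtrace_hermitian. Qed.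

Lemma density_spectral_mem i : D 0 i \in s.
Proof.
case: rho_density => herm _ _.
by rewrite (eigenvalues_dec_hermitian herm rho_eigen) codom_f.
Qed.

Lemma density_eigenvalue_ge0 x : x \in s -> 0 <= x.
Proof.
case: rho_density => herm psd _.
rewrite (eigenvalues_dec_hermitian herm rho_eigen) => /codomP [i ->].
exact: psd_spectral_ge0.
Qed.

Lemma density_spectral_bounds i : nth 0 s n.-1 <= D 0 i <= nth 0 s 0.
Proof.
case: rho_eigen => size_s _ s_sorted.
by rewrite -{1}size_s; apply: sorted_ge_nth_bounds s_sorted (density_spectral_mem i).
Qed.

Lemma density_top_eigenvalue_gt0 : (0 < n)%N -> 0 < nth 0 s 0.
Proof.
move=> n_gt0; rewrite -(pmulrn_lgt0 _ n_gt0) (lt_le_trans ltr01) //.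
rewrite -density_spectral_sum -[n in _ *+ n]card_ord -sumr_const.
by apply: ler_sum => i _; case/andP: (density_spectral_bounds i).
Qed.

End DensityMatrix.

Section PartialTrace.
Variables (C : numClosedFieldType) (m d n : nat).
Implicit Types (X : 'M[C]_(m * d, n)) (v : 'rV[C]_m) (e : 'rV[C]_n).

Definition ptrace_block X (j : 'I_d) : 'M[C]_(m, n) :=
  \matrix_(i, k) X (mxtens_index (i, j)) k.

Lemma ptrace2_conj_diag X e :
  ptrace2 (X *m diag_mx e *m dagmx X) =
  \sum_j ptrace_block X j *m diag_mx e *m dagmx (ptrace_block X j).
Proof.
apply/matrixP => i i'; rewrite !mxE summxE; apply: eq_bigr => j _.
by rewrite !mul_mx_diag !mxE; apply: eq_bigr => k _; rewrite !mxE.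
Qed.

Lemma diag_mx_quad_form (u : 'rV[C]_n) e :
  (u *m diag_mx e *m dagmx u) 0 0 = \sum_k e 0 k * `|u 0 k| ^+ 2.
Proof.
by rewrite mul_mx_diag mxE; apply: eq_bigr => k _; rewrite !mxE normCK mulrCA mulrA.
Qed.

Definition ptrace_weight X v (k : 'I_n) : C :=
  \sum_j `|(v *m ptrace_block X j) 0 k| ^+ 2.

Lemma ptrace2_quad_form X e v :
  (v *m ptrace2 (X *m diag_mx e *m dagmx X) *m dagmx v) 0 0 =
  \sum_k e 0 k * ptrace_weight X v k.
Proof.
rewrite ptrace2_conj_diag mulmx_sumr mulmx_suml summxE.
under eq_bigr do rewrite !mulmxA -mulmxA -dagmxM diag_mx_quad_form.
by rewrite exchange_big; apply: eq_bigr => k _; rewrite mulr_sumr.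
Qed.

Lemma ptrace_weight_ge0 X v k : 0 <= ptrace_weight X v k.
Proof. by apply: sumr_ge0 => j _; rewrite exprn_ge0. Qed.

Lemma ptrace_weight_le X v k : dagmx X *m X = 1%:M -> ptrace_weight X v k <= dotmx v v.
Proof.
move=> X_isometry; pose w j := dagmx (col k (ptrace_block X j)).
have col_norm1 : \sum_j dotmx (w j) (w j) = 1.
  have : (dagmx X *m X) k k = 1 by rewrite X_isometry mxE eqxx.
  rewrite mxE sum_mxtens_index exchange_big => <-; apply: eq_bigr => j _.
  by rewrite dotmxxE; apply: eq_bigr => i _; rewrite !mxE norm_conjC normCKC.
rewrite -[leRHS]mulr1 -col_norm1 mulr_sumr; apply: ler_sum => j _.
by rewrite mulmx_dotmx; apply: (CauchySchwarz (@dotmx C m) _ _).1.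
Qed.

Lemma ptrace_block_coisometry X j :
  X *m dagmx X = 1%:M -> ptrace_block X j *m dagmx (ptrace_block X j) = 1%:M.
Proof.
move=> /matrixP X_coisometry; apply/matrixP => i i'.
have := X_coisometry (mxtens_index (i, j)) (mxtens_index (i', j)).
rewrite !mxE (inj_eq (can_inj (@mxtens_indexK m d))) xpair_eqE eqxx andbT => <-.
by apply: eq_bigr => k _; rewrite !mxE.
Qed.

Lemma sum_ptrace_weight X v :
  X *m dagmx X = 1%:M -> \sum_k ptrace_weight X v k = d%:R * dotmx v v.
Proof.
move=> X_coisometry; rewrite exchange_big /= mulr_natl -[X in _ *+ X]card_ord.
rewrite -sumr_const; apply: eq_bigr => j _.
rewrite -dotmxxE !dotmxE -!dagmxE dagmxM mulmxA -(mulmxA v).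
by rewrite ptrace_block_coisometry // mulmx1.
Qed.

End PartialTrace.

Section WeightedSumBound.
Variables (F : numFieldType) (a0 a1 m b1 bd N : F).
Hypotheses (a0_le : a0 <= m) (a1_le : a1 <= m) (a0a1 : a0 + a1 = 1) (m_le1 : m <= 1).
Hypotheses (bd_ge0 : 0 <= bd) (b1_le : b1 <= m * (b1 + bd)) (N_gt0 : 0 < N).

(* [(1 - m) * b1] is the multiplier of the constraint [\sum_t (x t + y t) = d N]
   of [weighted_sum_le]. *)
Lemma pair_weight_le (b x y : F) :
  bd <= b -> b <= b1 -> 0 <= x <= N -> 0 <= y <= N ->
  a0 * b * x + a1 * b * y <= m * b * N + (1 - m) * b1 * (x + y - N).
Proof.
move=> bd_le le_b1 /andP[x_ge0 x_le] /andP[y_ge0 y_le].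
have m_ge0 : 0 <= m.
  by rewrite -(pmulrn_lge0 _ (isT : (0 < 2)%N)) (le_trans ler01) // -a0a1 mulr2n lerD.
have b_ge0 : 0 <= b := le_trans bd_ge0 bd_le.
rewrite -subr_ge0 -(pmulr_rge0 _ (exprn_gt0 2 N_gt0)).
(* The difference is bilinear in (x, y), so it is the combination of its values
   at the corners of [0, N]^2 with the nonnegative bilinear interpolation weights. *)
have -> : N ^+ 2 * (m * b * N + (1 - m) * b1 * (x + y - N) - (a0 * b * x + a1 * b * y)) =
    (N - x) * (N - y) * ((m * b - (1 - m) * b1) * N) + x * (N - y) * ((m - a0) * b * N)
    + (N - x) * y * ((m - a1) * b * N) + x * y * ((1 - m) * (b1 - b) * N).
  have a1E : a1 = 1 - a0 by rewrite -a0a1 addrAC subrr add0r.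
  by rewrite a1E; ring.
have corner00 : (1 - m) * b1 <= m * b.
  rewrite mulrBl mul1r lerBlDr -mulrDr; apply: le_trans b1_le _.
  by rewrite addrC ler_wpM2l // lerD2r.
by rewrite !addr_ge0 // !mulr_ge0 // ?subr_ge0 // ltW.
Qed.

Lemma weighted_sum_le d (b x y : 'I_d -> F) :
  (forall t, bd <= b t) -> (forall t, b t <= b1) -> \sum_t b t = 1 ->
  (forall t, 0 <= x t <= N) -> (forall t, 0 <= y t <= N) ->
  \sum_t (x t + y t) = d%:R * N ->
  \sum_t (a0 * b t * x t + a1 * b t * y t) <= m * N.
Proof.
move=> bd_le le_b1 sum_b xP yP sum_xy.
have pair_le t := pair_weight_le (bd_le t) (le_b1 t) (xP t) (yP t).
apply: le_trans (ler_sum _ (fun t _ => pair_le t)) _.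
rewrite big_split /= -mulr_sumr sumrB sum_xy sumr_const card_ord mulr_natl.
by rewrite subrr mulr0 addr0 -mulr_suml -mulr_sumr sum_b mulr1.
Qed.

End WeightedSumBound.

Lemma ptrace2_eigenvalue_le (C : numClosedFieldType) d (a : 'rV[C]_2) (b : 'rV[C]_d)
    (X : 'M[C]_(2 * d)) (lambda m b1 bd : C) :
  X \is unitarymx -> (forall i, a 0 i <= m) -> \sum_i a 0 i = 1 -> m <= 1 ->
  0 <= bd -> (forall t, bd <= b 0 t <= b1) -> \sum_t b 0 t = 1 ->
  b1 <= m * (b1 + bd) ->
  eigenvalue (ptrace2 (X *m diag_mx (a *t b) *m dagmx X)) lambda -> lambda <= m.
Proof.
move=> X_unit a_le a_sum m_le1 bd_ge0 b_bounds b_sum b1_le.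
case/eigenvalueP => v v_eigen v_neq0.
have N_gt0 : 0 < dotmx v v by rewrite dnorm_gt0.
have form : lambda * dotmx v v = \sum_k (a *t b) 0 k * ptrace_weight X v k.
  by rewrite -ptrace2_quad_form v_eigen -scalemxAl mxE dotmxE dagmxE.
have weight_bounds k : 0 <= ptrace_weight X v k <= dotmx v v.
  by rewrite ptrace_weight_ge0 ptrace_weight_le ?dagmx_mulmx_unitary.
have := @sum_ptrace_weight _ 2 d _ X v (unitary_mxP _ X_unit).
rewrite sum_mxtens_index !big_ord_recl big_ord0 addr0 -big_split => weight_sum.
rewrite -(ler_pM2r N_gt0) form sum_mxtens_index.
rewrite !big_ord_recl big_ord0 addr0 -big_split /=.
under eq_bigr do rewrite !tensrowE.
apply: (@weighted_sum_le _ _ _ m b1 bd) weight_sum => // [|t|t].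
- by rewrite -a_sum !big_ord_recl big_ord0 addr0.
- by case/andP: (b_bounds t).
- by case/andP: (b_bounds t).
Qed.

Lemma ptrace2_eigenvalue_le_max (C : numClosedFieldType) d (a : 'rV[C]_2) (b : 'rV[C]_d)
    (X : 'M[C]_(2 * d)) (lambda alpha b1 bd : C) :
  X \is unitarymx -> (forall i, a 0 i <= alpha) -> \sum_i a 0 i = 1 -> alpha <= 1 ->
  0 < b1 -> 0 <= bd -> (forall t, bd <= b 0 t <= b1) -> \sum_t b 0 t = 1 ->
  eigenvalue (ptrace2 (X *m diag_mx (a *t b) *m dagmx X)) lambda ->
  lambda <= Num.max alpha (b1 / (b1 + bd)).
Proof.
move=> X_unit a_le a_sum alpha_le1 b1_gt0 bd_ge0 b_bounds b_sum.
have b1bd_gt0 : 0 < b1 + bd by rewrite ltr_wpDr.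
have ratio_real : b1 / (b1 + bd) \is Num.real by rewrite ger0_real ?divr_ge0 ?ltW.
have cmp := real_comparable (ler1_real alpha_le1) ratio_real.
apply: (ptrace2_eigenvalue_le (b1 := b1) (bd := bd)) => // [i||].
- by apply: le_trans (a_le i) _; rewrite comparable_le_max ?lexx.
- by rewrite comparable_ge_max // alpha_le1 ler_pdivrMr // mul1r lerDl.
- apply: le_trans (_ : b1 / (b1 + bd) * (b1 + bd) <= _).
    by rewrite divfK ?gt_eqF.
  by rewrite ler_pM2r // comparable_le_max // lexx orbT.
Qed.

Unset Implicit Arguments. Set Strict Implicit.

Theorem theorem2 (R : rcfType) (d : nat) (hd : (2 <= d)%N)
  (rhoT : 'M[R[i]]_2) (rhoA : 'M[R[i]]_d) (U : 'M[R[i]]_(2 * d))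
  (alpha alpha_out : R[i]) (beta : seq R[i]) :
  density_matrix rhoT -> density_matrix rhoA -> unitary_mx U ->
  eigenvalues_dec rhoT [:: alpha; 1 - alpha] ->
  eigenvalues_dec rhoA beta ->
  eigenvalues_dec (ptrace2 (U *m (rhoT *t rhoA) *m dagmx U))
                  [:: alpha_out; 1 - alpha_out] ->
  alpha_out <= Num.max alpha
    (nth 0 beta 0 / (nth 0 beta 0 + nth 0 beta d.-1)).
Proof.
move=> T_density A_density /unitary_mxP U_unit T_eigen A_eigen [_ out_char _].
have [[T_herm _ _] [A_herm _ _]] := (T_density, A_density).
set P := spectralmx rhoT *t spectralmx rhoA.
have X_unit : U *m dagmx P \is unitarymx.
  by rewrite mul_unitarymx ?dagmx_unitary ?tensmx_unitary ?spectral_unitarymx.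
apply: (ptrace2_eigenvalue_le_max (a := spectral_diag rhoT) (b := spectral_diag rhoA)
          X_unit) => [i|||||t||].
- by case/andP: (density_spectral_bounds T_density T_eigen i).
- exact: density_spectral_sum T_density.
- by rewrite -subr_ge0 (density_eigenvalue_ge0 T_density T_eigen) // !inE eqxx orbT.
- exact: density_top_eigenvalue_gt0 A_density A_eigen (ltnW hd).
- have [size_beta _ _] := A_eigen.
  rewrite (density_eigenvalue_ge0 A_density A_eigen) // mem_nth //.
  by rewrite size_beta ltn_predL ltnW.
- exact: density_spectral_bounds A_density A_eigen t.
- exact: density_spectral_sum A_density.
- rewrite (tensmx_hermitian_spectralE T_herm A_herm) -/P !mulmxA in out_char.
  rewrite dagmxM dagmxK !mulmxA.
  by rewrite eigenvalue_root_char out_char root_prod_XsubC mem_head.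
Qed.
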